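(* Let $n\ge 6$ be even, let $j\in\{1,2,3,4\}$, and let $t\in D$ lie in the $j$-th segment of level $n$, i.e. $M_{n-1}+(j-1)2^{n-3}<t\le M_{n-1}+j\,2^{n-3}$. Then $4t-1$, $4t+1$, $4t+3$ all belong to $D$ and all lie in the $j$-th segment of level $n+2$, i.e. in the interval $\big(M_{n+1}+(j-1)2^{n-1},\ M_{n+1}+j\,2^{n-1}\big]$.
   Context: Let $D$ (OEIS A036991) be the set of nonnegative integers $m$ such that, reading the binary expansion of $m$ from the least significant bit to the most significant bit, at every point the number of 1's read so far is at least the number of 0's read so far. Let $M_n=2^n-1$. For even $n\ge 6$ the interval $(M_{n-1},M_n]$ (the $n$-level, of length $2^{n-1}$) is divided into four equal segments $(M_{n-1}+(j-1)2^{n-3},\,M_{n-1}+j\,2^{n-3}]$, $j=1,2,3,4$. *)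

From mathcomp Require Import all_boot.
Set Implicit Arguments. Unset Strict Implicit. Unset Printing Implicit Defensive.

(* Binary expansion of m, least significant bit first, without leading zeros.
   bits 0 = [::] (the empty expansion). Fuel m suffices since m./2 < m. *)
Fixpoint bits_aux (fuel m : nat) : seq bool :=
  match fuel with
  | 0 => [::]
  | fuel'.+1 => if m == 0 then [::] else odd m :: bits_aux fuel' m./2
  end.
Definition bits (m : nat) : seq bool := bits_aux m m.

(* A036991: reading bits from LSB to MSB, every prefix has #1 >= #0. *)
Definition inD (m : nat) : bool :=
  all (fun k => count (fun b => ~~ b) (take k (bits m)) <= count id (take k (bits m)))
      (iota 0 (size (bits m)).+1).

Definition Mn (n : nat) : nat := 2 ^ n - 1.

Definition in_segment (n j t : nat) : bool :=
  (Mn n.-1 + (j - 1) * 2 ^ (n - 3) < t) && (t <= Mn n.-1 + j * 2 ^ (n - 3)).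
Example bits_6 : bits 6 = [:: false; true; true]. Proof. by []. Qed.
Example inD_test : [seq m <- iota 0 20 | inD m] = [:: 0; 1; 3; 5; 7; 11; 13; 15; 19]. Proof. by vm_compute. Qed.

(* Reading 4t+1, 4t+3 and 4t-1 = 8u+3 (t = 2u+1) in binary from the least
   significant bit, their expansions are 10·t, 11·t and 1·10·u, where the
   expansion of t is 1·u.  Inserting the balanced block 10 or the block 11
   into a ballot sequence keeps it a ballot sequence, so D is closed under all
   three maps.  For the segments, write P = 2^(n-3): then M_(n-1) = 4P - 1 and
   M_(n+1) = 16P - 1, so multiplying by 4 maps the j-th segment of level n
   into that of level n+2 with room 3 to spare above.  The room 1 needed
   below for 4t-1 comes from parity: t is odd and so is the excluded lower
   endpoint 4P - 1 + (j-1)P (P is even), hence t exceeds it by at least 2. *)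
From mathcomp Require Import all_boot.
From mathcomp Require Import zify.

Set Implicit Arguments.
Unset Strict Implicit.
Unset Printing Implicit Defensive.

Lemma bits_aux_fuel f f' m : m <= f -> m <= f' -> bits_aux f m = bits_aux f' m.
Proof.
elim: f f' m => [|f IH] [|f'] m /=; rewrite ?leqn0.
- by [].
- by move=> /eqP -> _.
- by move=> _ /eqP ->.
move=> mf mf'; case: eqP => // /eqP m_neq0; congr (_ :: _).
by apply: IH; rewrite -divn2; lia.
Qed.

Lemma bitsE m : bits m = if m == 0 then [::] else odd m :: bits m./2.
Proof.
rewrite /bits; case: m => [|m] //; rewrite -[bits_aux m.+1 _]/(odd m.+1 :: _).
by congr (_ :: _); apply: bits_aux_fuel; rewrite -divn2; lia.
Qed.

Lemma bits_double_add m (b : bool) : 0 < m -> bits (m.*2 + b) = b :: bits m.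
Proof.
move=> m_gt0; rewrite bitsE; case: eqP => [|_]; first by rewrite -addnn; lia.
rewrite oddD odd_double oddb; congr (_ :: (bits _)).
by rewrite -divn2; case: b; lia.
Qed.

Definition ballot (s : seq bool) :=
  forall k, count negb (take k s) <= count id (take k s).

Lemma inDP m : inD m <-> ballot (bits m).
Proof.
split=> [/allP D_m k | ballot_m]; last by apply/allP=> k _; apply: ballot_m.
have [k_le | k_gt] := leqP k (size (bits m)).
  by apply: D_m; rewrite mem_iota; lia.
rewrite take_oversize; last exact: ltnW.
by have := D_m (size (bits m)); rewrite take_size mem_iota; apply; lia.
Qed.

Lemma ballot_head b s : ballot (b :: s) -> b.
Proof. by move=> /(_ 1); case: b; rewrite /= !take0. Qed.

Lemma ballot_insert s1 p s2 :
  ballot (s1 ++ s2) -> ballot p -> ballot (s1 ++ p ++ s2).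
Proof.
move=> ballot_s ballot_p k; rewrite take_cat; case: ltnP => k_s1.
  by have := ballot_s k; rewrite take_cat k_s1.
have := ballot_s (size s1); rewrite take_cat ltnn subnn take0 cats0 => ballot_s1.
rewrite take_cat !count_cat; case: ltnP => k_p.
  by have := ballot_p (k - size s1); lia.
have := ballot_p (size p); have := ballot_s (size s1 + (k - size s1 - size p)).
by rewrite take_size take_cat ltnNge leq_addr /= addKn !count_cat; lia.
Qed.

Lemma ballot_true_pair b : ballot [:: true; b].
Proof. by case=> [|[|k]] //; case: b. Qed.

Lemma inD_odd t : 0 < t -> inD t -> odd t.
Proof. by move=> t_gt0 /inDP; rewrite bitsE gtn_eqF // => /ballot_head. Qed.

Lemma inD_4t_add1 t : inD t -> inD (4 * t + 1).
Proof.
case: t => [|t] // /inDP ballot_t; apply/inDP.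
rewrite (_ : _ + 1 = (t.+1.*2 + false).*2 + true); last by rewrite -!addnn; lia.
rewrite !bits_double_add ?addn0 ?double_gt0 //.
exact: (@ballot_insert [::] _ _ ballot_t (ballot_true_pair _)).
Qed.

Lemma inD_4t_add3 t : inD t -> inD (4 * t + 3).
Proof.
case: t => [|t] // /inDP ballot_t; apply/inDP.
rewrite (_ : _ + 3 = (t.+1.*2 + true).*2 + true); last by rewrite -!addnn; lia.
rewrite !bits_double_add ?addn1 //.
exact: (@ballot_insert [::] _ _ ballot_t (ballot_true_pair _)).
Qed.

Lemma inD_4t_sub1 t : inD t -> inD (4 * t - 1).
Proof.
move=> D_t; have [-> // | t_gt0] := posnP t.
have t_odd := inD_odd t_gt0 D_t; move/inDP: D_t => ballot_t.
have [[|u] t_def] : exists u, t = u.*2 + true.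
- by exists t./2; rewrite addn1 -[t in LHS]odd_double_half t_odd.
- by rewrite t_def.
move: ballot_t; rewrite t_def bits_double_add // => ballot_u; apply/inDP.
rewrite (_ : _ - 1 = ((u.+1.*2 + false).*2 + true).*2 + true);
  last by rewrite -!addnn; lia.
rewrite !bits_double_add ?addn0 ?addn1 ?double_gt0 //.
exact: (@ballot_insert [:: true] _ _ ballot_u (ballot_true_pair false)).
Qed.

Lemma in_segment_scale4 n j t s :
  4 <= n -> odd t -> in_segment n j t -> 4 * t - 1 <= s <= 4 * t + 3 ->
  in_segment (n + 2) j s.
Proof.
rewrite /in_segment /Mn => n_ge4 t_odd.
have t_eq := odd_double_half t; rewrite t_odd -addnn in t_eq.
have -> : n.-1 = n - 4 + 3 by lia.
have -> : (n + 2).-1 = n - 4 + 5 by lia.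
have -> : n + 2 - 3 = n - 4 + 3 by lia.
have -> : n - 3 = n - 4 + 1 by lia.
have : 0 < 2 ^ (n - 4) by rewrite expn_gt0.
rewrite !expnD; move: (2 ^ (n - 4)) => R R_gt0.
case: j => [|j]; first lia.
rewrite (subSS 0 j) subn0 !mulnA mulSn; move: (j * R) => Q; lia.
Qed.

Theorem proposition12 (n j t : nat) :
  6 <= n -> ~~ odd n -> 1 <= j <= 4 -> inD t ->
  in_segment n j t ->
  [/\ inD (4 * t - 1), inD (4 * t + 1) & inD (4 * t + 3)] /\
  [/\ in_segment (n + 2) j (4 * t - 1), in_segment (n + 2) j (4 * t + 1)
    & in_segment (n + 2) j (4 * t + 3)].
Proof.
move=> n_ge6 _ _ D_t seg_t.
have t_gt0 : 0 < t by case/andP: seg_t => /(leq_ltn_trans (leq0n _)).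
have n_ge4 : 4 <= n by lia.
split; first by split; [exact: inD_4t_sub1 | exact: inD_4t_add1 | exact: inD_4t_add3].
by split; apply: (in_segment_scale4 n_ge4 (inD_odd t_gt0 D_t) seg_t); lia.
Qed.
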